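(* Let $n\ge 1$ and let $R_n=\{s_1,\dots,s_n\}$, where $s_1=0$ and $s_i=1\,0^{i-2}\,1$ for $2\le i\le n$. Then for every code $C_n\in\mathbb{S}_n$, every codeword of $C_n$ has some codeword of $R_n$ as a prefix.
   Context: All strings are finite binary strings; $0^{r}$ denotes the string of $r$ zeros and $|w|$ the length of $w$. A palindrome is a string equal to its reversal. A symmetric fix-free code is a finite set of binary palindromes no one of which is a proper prefix of another. $\mathbb{S}_n$ denotes the set of symmetric fix-free codes with exactly $n$ codewords which do not contain the one-bit string $1$ and all of whose codewords have length at most $n$. ''Prefix'' includes the case of equality. *)

From mathcomp Require Import all_boot.
Set Implicit Arguments. Unset Strict Implicit. Unset Printing Implicit Defensive.

(* Binary strings: seq bool, with false = 0 and true = 1. *)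
Definition bstring := seq bool.

Definition palindrome (w : bstring) : bool := rev w == w.

Definition proper_prefix (u v : bstring) : bool := prefix u v && (u != v).

Definition sym_fixfree (C : seq bstring) : Prop :=
  [/\ uniq C,
      forall w, w \in C -> w != [::],
      forall w, w \in C -> palindrome w &
      forall u v, u \in C -> v \in C -> ~~ proper_prefix u v].

Definition SS (n : nat) (C : seq bstring) : Prop :=
  [/\ sym_fixfree C, size C = n, [:: true] \notin C &
      forall w, w \in C -> size w <= n].

Definition s_ (i : nat) : bstring :=
  if i == 1 then [:: false] else true :: rcons (nseq (i - 2) false) true.

Definition R_ (n : nat) : seq bstring := [seq s_ i | i <- iota 1 n].

From mathcomp Require Import all_boot.

(* A codeword starting with 0 has s_1 = 0 as a prefix.  A codeword starting
   with 1 is a palindrome different from 1, so it also ends with 1; it thus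
   begins with 1 0^j 1 = s_(j+2), and the length bound |w| <= n gives
   j + 2 <= n. *)

Lemma mem_s_R (n i : nat) : 1 <= i <= n -> s_ i \in R_ n.
Proof.
by case/andP=> i_gt0 le_in; apply: map_f; rewrite mem_iota i_gt0 add1n ltnS.
Qed.

Lemma nseq_index_true (t : seq bool) : true \in t ->
  t = nseq (index true t) false ++ true :: drop (index true t).+1 t.
Proof.
elim: t => [//|[] t IHt] /=; first by rewrite drop0.
by rewrite in_cons => /IHt {1}->.
Qed.

Lemma prefix_s_index_true (t : seq bool) : true \in t ->
  prefix (s_ (index true t).+2) (true :: t).
Proof.
move=> t_true; rewrite /s_ /= subn2 /= {2}(nseq_index_true _ t_true) -cat_rcons.
exact: prefix_prefix.
Qed.

Lemma palindrome_true_mem (t : seq bool) :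
  t != [::] -> palindrome (true :: t) -> true \in t.
Proof.
case/lastP: t => [//|t x] _; rewrite /palindrome rev_cons rev_rcons.
by case/eqP=> <- _; rewrite mem_rcons mem_head.
Qed.

Theorem lemma1 (n : nat) (C : seq bstring) :
  1 <= n -> SS n C ->
  forall w, w \in C -> exists2 s, s \in R_ n & prefix s w.
Proof.
move=> n_gt0 [[_ C_nonempty C_pal _] _ C1 C_size] w wC.
case: w wC (C_nonempty _ wC) (C_pal _ wC) (C_size _ wC) => [//|[] t] wC _ pal sz.
- have t_nonempty : t != [::] by case: t wC {pal sz} => // wC; rewrite wC in C1.
  have t_true := palindrome_true_mem _ t_nonempty pal.
  exists (s_ (index true t).+2); last exact: prefix_s_index_true.
  by apply: mem_s_R; rewrite /=; apply: leq_ltn_trans sz; rewrite index_mem.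
- by exists (s_ 1); [apply: mem_s_R; rewrite n_gt0 | rewrite /s_ /= prefix0s].
Qed.
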